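(* Let $k\ge 3$ and $n>3$. Protocol 3 (Cross-edges Tree), run on $n$ nodes with one node initially in $L_0$ and the others in $F$, never stabilises with isolated nodes: in every stable configuration reached by a fair execution, every node belongs to the leader's connected component (in particular no node remains in state $F$).
   Context: Network constructor model: $n$ nodes, every pair may interact; node states from a finite set; each node pair has an edge state in $\{0,1\}$, initially $0$. At each step a pair of nodes is selected and updated according to the transition rules (either ordering of the pair); unlisted triples are unchanged. A configuration is stable if no listed rule is applicable to any pair of nodes. An infinite execution is fair if whenever a configuration $C$ occurs infinitely often, every configuration reachable from $C$ in one step occurs infinitely often. Protocol 3 (Cross-edges Tree), for a parameter $k$: $Q=\{F,L_0,\dots,L_k,O_0,\dots,O_k\}$, rules $(L_x,F,0)\to(L_{x+1},O_0,1)$ for $x<k$; $(O_y,F,0)\to(O_{y+1},O_0,1)$ for $y<k$; $(L_x,O_y,0)\to(L_{x+1},O_{y+1},1)$ for $x,y<k-1$; $(O_y,O_z,0)\to(O_{y+1},O_{z+1},1)$ for $y,z<k-1$. *)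

From mathcomp Require Import all_boot.
Set Implicit Arguments. Unset Strict Implicit. Unset Printing Implicit Defensive.

(* Node states of Protocol 3: F, L_x, O_y (indices as nat; from the initial
   configuration only indices <= k are ever reached). *)
Inductive st := SF | SL of nat | SO of nat.

(* Transition rules of Protocol 3 (Cross-edges Tree) with parameter k.
   [rule k a b e] is [Some (a',b',e')] iff (a,b,e) -> (a',b',e') is listed. *)
Definition rule (k : nat) (a b : st) (e : bool) : option (st * st * bool) :=
  if e then None else
  match a, b with
  | SL x, SF => if x < k then Some (SL x.+1, SO 0, true) else None
  | SO y, SF => if y < k then Some (SO y.+1, SO 0, true) else None
  | SL x, SO y => if (x < k - 1) && (y < k - 1)
                  then Some (SL x.+1, SO y.+1, true) else None
  | SO y, SO z => if (y < k - 1) && (z < k - 1)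
                  then Some (SO y.+1, SO z.+1, true) else None
  | _, _ => None
  end.

(* A configuration: node states and edge states (edge state of {u,v} stored
   symmetrically at (u,v) and (v,u)). *)
Record config (n : nat) := Config {
  cst : {ffun 'I_n -> st};
  ced : {ffun 'I_n * 'I_n -> bool} }.

(* Interaction of the selected pair (u,v) with u as first component of the rule;
   the other ordering is covered by selecting (v,u). Unlisted triples: no change. *)
Definition interact (k n : nat) (u v : 'I_n) (C : config n) : config n :=
  match rule k (cst C u) (cst C v) (ced C (u, v)) with
  | Some (a, b, e) =>
      Config [ffun w => if w == u then a else if w == v then b else cst C w]
             [ffun p => if (p == (u, v)) || (p == (v, u)) then e else ced C p]
  | None => C
  end.

Definition step (k n : nat) (C C' : config n) : Prop :=
  exists u v : 'I_n, u != v /\ C' = interact k u v C.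

Definition stable (k n : nat) (C : config n) : Prop :=
  forall u v : 'I_n, u != v -> rule k (cst C u) (cst C v) (ced C (u, v)) = None.

Definition init (n : nat) (l : 'I_n) : config n :=
  Config [ffun w => if w == l then SL 0 else SF] [ffun _ => false].

Definition infinitely_often (n : nat) (ex : nat -> config n) (C : config n) : Prop :=
  forall m, exists t, m <= t /\ ex t = C.

Definition execution (k n : nat) (l : 'I_n) (ex : nat -> config n) : Prop :=
  ex 0 = init l /\ forall t, step k (ex t) (ex t.+1).

Definition fair (k n : nat) (ex : nat -> config n) : Prop :=
  forall C C', infinitely_often ex C -> step k C C' -> infinitely_often ex C'.

Definition active (n : nat) (C : config n) : rel 'I_n :=
  [rel u v | ced C (u, v)].

From mathcomp Require Import all_boot.
From mathcomp Require Import zify.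
Set Implicit Arguments. Unset Strict Implicit.

(* Call a node state unsaturated when it is L_x or O_y with
   index below k; an unsaturated node can still recruit any free node F it is
   not yet linked to.  Every rule fires only on an inactive edge, between two
   non-F states after the interaction, activates that edge, and leaves at least
   one of its two endpoints unsaturated (the new O_0, or the incremented
   indices which stay below k).  Hence, along any execution from the initial
   configuration, the following invariant holds:
     (i)   the leader is not free;
     (ii)  active edges only join non-free nodes;
     (iii) every non-free node is connected to the leader by active edges;
     (iv)  if some node is free, some node is unsaturated.
   In a stable configuration (iv) cannot apply: an unsaturated node and a free
   node are joined by an inactive edge by (ii), so a rule would still fire.
   Thus no node is free, and (iii) gives connectivity. *)

Definition unsaturated (k : nat) (s : st) : bool :=
  match s with SF => false | SL x | SO x => x < k end.

Lemma rule_recruits k s : unsaturated k s -> rule k s SF false <> None.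
Proof. by case: s => //= x ->. Qed.

Lemma rule_fires k s1 s2 e0 a b e : rule k s1 s2 e0 = Some (a, b, e) ->
  [/\ e = true, s1 <> SF, a <> SF, b <> SF & unsaturated k a || unsaturated k b].
Proof.
case: e0 => //=; case: s1 => [|x|x]; case: s2 => [|y|y] //=.
- by case: ifP => // Hx [<- <- <-]; split => //=; apply/orP; right; lia.
- by case: ifP => // /andP[Hx _] [<- <- <-]; split => //=; apply/orP; left; lia.
- by case: ifP => // Hx [<- <- <-]; split => //=; apply/orP; right; lia.
- by case: ifP => // /andP[Hy _] [<- <- <-]; split => //=; apply/orP; left; lia.
Qed.

Definition invariant (k n : nat) (l : 'I_n) (C : config n) : Prop :=
  [/\ cst C l <> SF,
      (forall p q, ced C (p, q) -> cst C p <> SF /\ cst C q <> SF),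
      (forall w, cst C w <> SF -> connect (active C) l w) &
      ((exists f, cst C f = SF) -> exists w, unsaturated k (cst C w))].

(* The initial configuration satisfies it: the leader L_0 is unsaturated. *)
Lemma invariant_init k n (l : 'I_n) : 0 < k -> invariant k l (init l).
Proof.
move=> Hk; split=> /= [|p q|w|_]; rewrite ?ffunE ?eqxx //.
- by case: (eqVneq w l) => [->|].
- by exists l; rewrite ffunE eqxx.
Qed.

Section FiringInteraction.
Variables (k n : nat) (C : config n) (u v : 'I_n) (a b : st) (e : bool).
Hypothesis neq_uv : u != v.
Hypothesis fires : rule k (cst C u) (cst C v) (ced C (u, v)) = Some (a, b, e).

Local Notation D := (interact k u v C).

Lemma cst_fired w :
  cst D w = if w == u then a else if w == v then b else cst C w.
Proof. by rewrite /interact fires ffunE. Qed.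

Lemma ced_fired p : ced D p = ((p == (u, v)) || (p == (v, u))) || ced C p.
Proof.
have [He _ _ _ _] := rule_fires fires.
by rewrite /interact fires ffunE He; case: ifP.
Qed.

Lemma fired_not_free w :
  cst C w <> SF \/ w = u \/ w = v -> cst D w <> SF.
Proof.
have [_ _ Ha Hb _] := rule_fires fires.
rewrite cst_fired => Hw; case: (eqVneq w u) => // Hwu; case: (eqVneq w v) => // Hwv.
by case: Hw => // -[/eqP|/eqP]; rewrite ?(negbTE Hwu) ?(negbTE Hwv).
Qed.

(* Active edges are never switched off, so connectivity is preserved. *)
Lemma connect_fired x y : connect (active C) x y -> connect (active D) x y.
Proof.
apply: connect_sub => p q Hpq; apply: connect1.
by rewrite -[active D p q]/(ced D (p, q)) ced_fired [ced C _]Hpq orbT.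
Qed.

Lemma invariant_fired (l : 'I_n) : invariant k l C -> invariant k l D.
Proof.
have [_ Hu Ha Hb Hab] := rule_fires fires.
move=> [Hl HE HC HU]; split.
- by apply: fired_not_free; left; exact: Hl.
- move=> p q; rewrite ced_fired => /orP[/orP[]/eqP[-> ->]|/HE[Hp Hq]].
  + by split; apply: fired_not_free; right; [left|right].
  + by split; apply: fired_not_free; right; [right|left].
  + by split; apply: fired_not_free; left.
- move=> w Hw; case: (eqVneq w v) => [->|Hwv].
    apply: connect_trans (connect_fired (HC u Hu)) (connect1 _).
    by rewrite -[active D u v]/(ced D (u, v)) ced_fired eqxx.
  apply/connect_fired/HC; case: (eqVneq w u) => [-> //|Hwu].
  by move: Hw; rewrite cst_fired (negbTE Hwu) (negbTE Hwv).
- move=> [f]; rewrite cst_fired.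
  case: ifP => _; first by move/Ha.
  case: ifP => _; first by move/Hb.
  move=> _; case/orP: Hab => Hab; [exists u | exists v]; rewrite cst_fired eqxx //.
  by rewrite eq_sym (negbTE neq_uv).
Qed.

End FiringInteraction.

(* Non-firing interactions leave the configuration unchanged. *)
Lemma invariant_step k n (l : 'I_n) (C C' : config n) :
  invariant k l C -> step k C C' -> invariant k l C'.
Proof.
move=> HI [u [v [Huv ->]]].
case Hr: (rule k (cst C u) (cst C v) (ced C (u, v))) => [[[a b] e]|].
- exact: (invariant_fired Huv Hr HI).
- by rewrite /interact Hr.
Qed.

Lemma invariant_execution k n (l : 'I_n) (ex : nat -> config n) :
  0 < k -> execution k l ex -> forall t, invariant k l (ex t).
Proof.
move=> Hk [H0 Hs]; elim=> [|t IH]; first by rewrite H0; apply: invariant_init.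
exact: invariant_step IH (Hs t).
Qed.

Lemma stable_no_free k n (l : 'I_n) (C : config n) :
  invariant k l C -> stable k C -> forall w, cst C w <> SF.
Proof.
move=> [_ HE _ HU] Hst w Hw; have [u Hu] := HU (ex_intro _ w Hw).
have Huw : u != w by apply/eqP => Euw; move: Hu; rewrite Euw Hw.
have Hinactive : ced C (u, w) = false.
  by apply/negbTE/negP => /HE[_]; rewrite Hw.
by apply: (rule_recruits Hu); rewrite -Hw -Hinactive; apply: Hst.
Qed.

Theorem corollary1 (k n : nat) (l : 'I_n) (ex : nat -> config n) :
  3 <= k -> 3 < n ->
  execution k l ex -> fair k ex ->
  forall t, stable k (ex t) ->
  forall v : 'I_n, connect (active (ex t)) l v /\ cst (ex t) v <> SF.
Proof.
move=> Hk _ Hex _ t Hst v.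
have k_pos : 0 < k by lia.
have HI := invariant_execution k_pos Hex t.
have HnF := stable_no_free HI Hst (w := v).
by case: HI => _ _ HC _; split; [apply: HC|].
Qed.
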